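(* Let $n,m$ be positive integers and $\mathbf a,\mathbf b\in\mathbb N^n$. Then the $m$th Pitman--Stanley polytope $\mathrm{PS}_n^m(\mathbf a,\mathbf b)$ is integrally equivalent to the flow polytope $\mathcal F_{G(n,m)}(\mathbf a,\mathbf b)$.
   Context: For $\mathbf a,\mathbf b\in\mathbb N^n$, $\mathrm{PS}_n^m(\mathbf a,\mathbf b)$ is the set of real matrices $(x_{ij})_{1\le i\le n,\,1\le j\le m}$ with nonnegative entries such that for every $i=1,\dots,n$: $$b_1+\cdots+b_i\le \sum_{k=1}^i x_{km}\le \sum_{k=1}^i x_{k,m-1}\le\cdots\le \sum_{k=1}^i x_{k1}\le a_1+\cdots+a_i .$$ $G(n,m)$ is the directed graph with vertex set $\{(i,j):1\le i\le n,\ 0\le j\le m\}\cup\{s\}$ and edges $((i,j),(i,j+1))$ for $1\le i\le n$, $0\le j\le m-1$; $((i,j),(i+1,j))$ for $1\le i\le n-1$, $0\le j\le m$; and $((n,j),s)$ for $0\le j\le m$. The flow polytope $\mathcal F_{G(n,m)}(\mathbf a,\mathbf b)\subset\mathbb R^{E(G(n,m))}$ is the set of assignments $f:E\to\mathbb R_{\ge0}$ such that at every vertex $v$, (total flow on edges leaving $v$) $-$ (total flow on edges entering $v$) equals the netflow of $v$, where vertex $(i,0)$ has netflow $a_i$, vertex $(i,m)$ has netflow $-b_i$, the sink $s$ has netflow $-\sum_i a_i+\sum_i b_i$, and all other vertices have netflow $0$. Two lattice polytopes $P\subset\mathbb R^p$, $Q\subset\mathbb R^q$ are integrally equivalent if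 there is an affine map $\Phi:\mathbb R^p\to\mathbb R^q$ restricting to a bijection $P\to Q$ that preserves the lattice (i.e. induces a bijection between the integer points of the affine spans of $P$ and $Q$). *)

From HB Require Import structures.
From mathcomp Require Import all_boot all_order all_algebra.
From mathcomp Require Import reals.
Set Implicit Arguments. Unset Strict Implicit. Unset Printing Implicit Defensive.
Import Order.TTheory GRing.Theory Num.Theory.
Local Open Scope ring_scope.

Section Defs.
Variable R : realFieldType.

Definition int_point (T : finType) (x : T -> R) : Prop :=
  forall t, exists z : int, x t = z%:~R.

Definition aff_span (T : finType) (P : (T -> R) -> Prop) (x : T -> R) : Prop :=
  exists (k : nat) (p : 'I_k -> (T -> R)) (l : 'I_k -> R),
      (forall i, P (p i)) /\ (\sum_(i < k) l i = 1) /\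
    (forall t, x t = \sum_(i < k) l i * p i t).

Definition affine_map (T1 T2 : finType) (A : T2 -> T1 -> R) (c : T2 -> R)
  (x : T1 -> R) : T2 -> R :=
  fun t => c t + \sum_(s : T1) A t s * x s.

Definition integrally_equivalent (T1 T2 : finType)
  (P : (T1 -> R) -> Prop) (Q : (T2 -> R) -> Prop) : Prop :=
  exists (A : T2 -> T1 -> R) (c : T2 -> R),
    let Phi := affine_map A c in
    ((forall x, P x -> Q (Phi x)) /\
     (forall x y, P x -> P y -> Phi x =1 Phi y -> x =1 y) /\
     (forall y, Q y -> exists2 x, P x & Phi x =1 y)) /\
    ((forall x, aff_span P x -> int_point x ->
                aff_span Q (Phi x) /\ int_point (Phi x)) /\
     (forall x y, aff_span P x -> int_point x -> aff_span P y -> int_point y ->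
                  Phi x =1 Phi y -> x =1 y) /\
     (forall y, aff_span Q y -> int_point y ->
                exists2 x, aff_span P x /\ int_point x & Phi x =1 y)).

(* Rows i : 'I_n (paper's i = i+1), columns j : 'I_m (paper's j = j+1). *)

Definition psum (n m : nat) (x : 'I_n * 'I_m -> R) (i : 'I_n) (j : 'I_m) : R :=
  \sum_(k < n | (k <= i)%N) x (k, j).

Definition natsum (n : nat) (a : 'I_n -> nat) (i : 'I_n) : R :=
  (\sum_(k < n | (k <= i)%N) a k)%:R.

Definition PS (n m : nat) (a b : 'I_n -> nat) (x : 'I_n * 'I_m -> R) : Prop :=
  (forall p, 0 <= x p) /\
  forall i : 'I_n,
    (forall j : 'I_m, j.+1 = m -> natsum b i <= psum x i j) /\
    (forall j j' : 'I_m, j'.+1 = j -> psum x i j <= psum x i j') /\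
    (forall j : 'I_m, j = 0%N :> nat -> psum x i j <= natsum a i).

(* Vertices (i,j) (paper: 1<=i<=n, 0<=j<=m) are encoded as Some (i-1, j);
   the sink s is None. *)
Definition vertex := option (nat * nat).

(* Edges: horizontal ((i,j),(i,j+1)), vertical ((i,j),(i+1,j)), sink ((n,j),s) *)
Definition edge (n m : nat) : finType :=
  (('I_n * 'I_m) + ('I_n.-1 * 'I_m.+1) + 'I_m.+1)%type.

Definition etail (n m : nat) (e : edge n m) : vertex :=
  match e with
  | inl (inl (i, j)) => Some (val i, val j)
  | inl (inr (i, j)) => Some (val i, val j)
  | inr j => Some (n.-1, val j)
  end.

Definition ehead (n m : nat) (e : edge n m) : vertex :=
  match e with
  | inl (inl (i, j)) => Some (val i, (val j).+1)
  | inl (inr (i, j)) => Some ((val i).+1, val j)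
  | inr j => None
  end.

Definition vertex_of (n m : nat) (v : option ('I_n * 'I_m.+1)) : vertex :=
  match v with Some (i, j) => Some (val i, val j) | None => None end.

Definition netflow (n m : nat) (a b : 'I_n -> nat)
  (v : option ('I_n * 'I_m.+1)) : R :=
  match v with
  | Some (i, j) =>
      if val j == 0%N then (a i)%:R
      else if val j == m then - (b i)%:R else 0
  | None => - (\sum_(i < n) (a i)%:R) + \sum_(i < n) (b i)%:R
  end.

Definition flow_polytope (n m : nat) (a b : 'I_n -> nat)
  (f : edge n m -> R) : Prop :=
  (forall e, 0 <= f e) /\
  forall v : option ('I_n * 'I_m.+1),
    \sum_(e : edge n m | etail e == vertex_of v) f e
    - \sum_(e : edge n m | ehead e == vertex_of v) f e = @netflow n m a b v.

End Defs.

From HB Require Import structures.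
From mathcomp Require Import all_boot all_order all_algebra.
From mathcomp Require Import reals.
From mathcomp Require Import zify.
Set Implicit Arguments. Unset Strict Implicit. Unset Printing Implicit Defensive.
Import Order.TTheory GRing.Theory Num.Theory.
Local Open Scope ring_scope.

(* Put x_{ij} on the horizontal edge ((i,j-1),(i,j)).  Conservation at the
   vertices (1,c), ..., (i,c) then forces the flow leaving (i,c) downwards (to
   (i+1,c), or to the sink when i = n) to be A_i - X_i^1, X_i^c - X_i^{c+1} or
   X_i^m - B_i according as c = 0, 0 < c < m or c = m, where X_i^j is the
   partial column sum x_{1j} + ... + x_{ij} and A_i, B_i are the partial sums of
   a, b.  These are exactly the slacks of the Pitman-Stanley inequalities, and
   the balance at the sink follows by telescoping in c.  So x |-> flow is an
   affine map with integer coefficients from PS onto F whose inverse, the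
   restriction to horizontal edges, is integral too; and mutually inverse affine
   maps stay mutually inverse on the affine spans. *)

Section AffineMaps.
Variable R : realFieldType.

Lemma affine_map_ext (T1 T2 : finType) (A : T2 -> T1 -> R) c x y :
  x =1 y -> affine_map A c x =1 affine_map A c y.
Proof. by move=> xy t; rewrite /affine_map; under eq_bigr do rewrite xy. Qed.

Lemma affine_map_comb (T1 T2 : finType) (A : T2 -> T1 -> R) c k
    (p : 'I_k -> T1 -> R) (l : 'I_k -> R) x :
  \sum_(i < k) l i = 1 -> (forall s, x s = \sum_(i < k) l i * p i s) ->
  forall t, affine_map A c x t = \sum_(i < k) l i * affine_map A c (p i) t.
Proof.
move=> l1 xE t; rewrite /affine_map.
under [RHS]eq_bigr do rewrite mulrDr.
rewrite big_split /= -mulr_suml l1 mul1r; congr (_ + _).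
under eq_bigr do rewrite xE mulr_sumr.
rewrite exchange_big /=; apply: eq_bigr => i _; rewrite mulr_sumr.
by apply: eq_bigr => s _; rewrite mulrCA.
Qed.

Lemma aff_span_affine_map (T1 T2 : finType) (P : (T1 -> R) -> Prop)
    (Q : (T2 -> R) -> Prop) (A : T2 -> T1 -> R) (c : T2 -> R) :
  (forall x, P x -> Q (affine_map A c x)) ->
  forall x, aff_span P x -> aff_span Q (affine_map A c x).
Proof.
move=> PQ x [k [p [l [Pp [l1 xE]]]]].
exists k, (fun i => affine_map A c (p i)), l.
by split; [move=> i; exact: PQ | split; [|exact: affine_map_comb]].
Qed.

Lemma aff_span_affine_cancel (T1 T2 : finType) (P : (T1 -> R) -> Prop)
    (A : T2 -> T1 -> R) (c : T2 -> R) (B : T1 -> T2 -> R) (d : T1 -> R) :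
  (forall x, P x -> affine_map B d (affine_map A c x) =1 x) ->
  forall x, aff_span P x -> affine_map B d (affine_map A c x) =1 x.
Proof.
move=> inv x [k [p [l [Pp [l1 xE]]]]] s.
rewrite (affine_map_comb _ _ l1 (affine_map_comb _ _ l1 xE)) xE.
by apply: eq_bigr => i _; rewrite inv.
Qed.

End AffineMaps.

Section IntegralEquivalence.
Variable R : archiRealFieldType.

Lemma int_point_affine_map (T1 T2 : finType) (A : T2 -> T1 -> R) (c : T2 -> R) :
  (forall t s, A t s \is a Num.int) -> (forall t, c t \is a Num.int) ->
  forall x, int_point x -> int_point (affine_map A c x).
Proof.
move=> A_int c_int x x_int t; apply/intrP.
rewrite rpredD // rpred_sum // => s _; rewrite rpredM //.
by apply/intrP; exact: x_int.
Qed.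

Variables T1 T2 : finType.
Variables (P : (T1 -> R) -> Prop) (Q : (T2 -> R) -> Prop).
Variables (A : T2 -> T1 -> R) (c : T2 -> R) (B : T1 -> T2 -> R) (d : T1 -> R).
Hypotheses (A_int : forall t s, A t s \is a Num.int) (c_int : forall t, c t \is a Num.int).
Hypotheses (B_int : forall s t, B s t \is a Num.int) (d_int : forall s, d s \is a Num.int).
Local Notation Phi := (affine_map A c).
Local Notation Psi := (affine_map B d).
Hypotheses (PQ : forall x, P x -> Q (Phi x)) (QP : forall y, Q y -> P (Psi y)).
Hypotheses (PsiK : forall x, P x -> Psi (Phi x) =1 x).
Hypotheses (PhiK : forall y, Q y -> Phi (Psi y) =1 y).

Lemma integrally_equivalent_affine_inverse : integrally_equivalent P Q.
Proof.
have span x : P x -> aff_span P x.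
  move=> Px; exists 1%N, (fun=> x), (fun=> 1).
  by do !split; rewrite // ?big_ord1 // => t; rewrite big_ord1 mul1r.
have Phi_inj x y : aff_span P x -> aff_span P y -> Phi x =1 Phi y -> x =1 y.
  move=> Sx Sy xy s.
  rewrite -(aff_span_affine_cancel PsiK Sx) -(aff_span_affine_cancel PsiK Sy).
  exact: affine_map_ext.
exists A, c; split; [split; [|split] | split; [|split]].
- exact: PQ.
- by move=> x y Px Py; apply: Phi_inj; apply: span.
- by move=> y Qy; exists (Psi y); [exact: QP | exact: PhiK].
- move=> x Sx x_int; split; first exact: aff_span_affine_map PQ _ Sx.
  exact: int_point_affine_map.
- by move=> x y Sx _ Sy _; apply: Phi_inj.
- move=> y Sy y_int; exists (Psi y); last exact: (aff_span_affine_cancel PhiK Sy).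
  split; first exact: aff_span_affine_map QP _ Sy.
  exact: int_point_affine_map.
Qed.

End IntegralEquivalence.

Section PrefixSums.
Variables (V : zmodType) (n : nat).

Lemma prefix_sum_rec (F : 'I_n -> V) (i : 'I_n) :
  \sum_(k < n | (k <= i)%N) F k
    = F i + (if val i is i'.+1 then \sum_(k < n | (k <= i')%N) F k else 0).
Proof.
rewrite (bigD1 i) //=; congr (_ + _); case: i => [[|i] lt_in] /=.
  by apply: big_pred0 => k; rewrite -val_eqE /=; lia.
by apply: eq_bigl => k; rewrite -val_eqE /=; lia.
Qed.

Lemma prefix_sumP (D : nat -> V) (r : 'I_n -> V) :
  (forall i : 'I_n, D i - (if val i is i'.+1 then D i' else 0) = r i) <->
  (forall i : 'I_n, D i = \sum_(k < n | (k <= i)%N) r k).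
Proof.
split=> H [i lt_in].
  elim: i lt_in => [|i IH] lt_in; rewrite prefix_sum_rec -(H (Ordinal lt_in)) /=.
    by rewrite !subr0 addr0.
  by rewrite -(IH (ltnW lt_in)) subrK.
rewrite H prefix_sum_rec; case: i lt_in => [|i] lt_in /=; first by rewrite !subr0 addr0.
by rewrite (H (Ordinal (ltnW lt_in))) addrK.
Qed.

End PrefixSums.

Lemma sumr_indicator (S : pzSemiRingType) (T : finType) (P : pred T) (F : T -> S) :
  \sum_t (P t)%:R * F t = \sum_(t | P t) F t.
Proof.
by rewrite [RHS]big_mkcond; apply: eq_bigr => t _; case: (P t); rewrite ?mul1r ?mul0r.
Qed.

Section PitmanStanleyFlows.
Variables (R : realFieldType) (n m : nat) (a b : 'I_n -> nat).

Definition hor (s : 'I_n * 'I_m) : edge n m := inl (inl s).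
Definition ver (t : 'I_n.-1 * 'I_m.+1) : edge n m := inl (inr t).
Definition sink (t : 'I_m.+1) : edge n m := inr t.

Definition netout (g : edge n m -> R) (v : option ('I_n * 'I_m.+1)) : R :=
  \sum_(e : edge n m | etail e == vertex_of v) g e
  - \sum_(e : edge n m | ehead e == vertex_of v) g e.

Definition restrict_mx (s : 'I_n * 'I_m) (e : edge n m) : R := (e == hor s)%:R.

Local Notation restrict := (affine_map restrict_mx (fun=> 0)).

Lemma restrictE g s : restrict g s = g (hor s).
Proof. by rewrite /affine_map add0r sumr_indicator big_pred1_eq. Qed.

Definition hnet_coef (k c : nat) (s : 'I_n * 'I_m) : R :=
  ((s.1 == k :> nat) && (s.2 == c :> nat))%:R
  - ((s.1 == k :> nat) && (s.2.+1 == c))%:R.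

Definition hnet (x : 'I_n * 'I_m -> R) (k c : nat) : R :=
  \sum_s hnet_coef k c s * x s.

Lemma hnetE x k c :
  hnet x k c = \sum_(s : 'I_n * 'I_m | (s.1 == k :> nat) && (s.2 == c :> nat)) x s
             - \sum_(s : 'I_n * 'I_m | (s.1 == k :> nat) && (s.2.+1 == c)) x s.
Proof.
rewrite /hnet /hnet_coef; under eq_bigr do rewrite mulrBl.
by rewrite sumrB !sumr_indicator.
Qed.

Definition vflow_coef (i c : nat) (s : 'I_n * 'I_m) : R :=
  - \sum_(k < n | (k <= i)%N) hnet_coef k c s.

Definition vflow_const (i : nat) (c : 'I_m.+1) : R :=
  \sum_(k < n | (k <= i)%N) netflow R a b (Some (k, c)).

(* Conservation at (0, c), ..., (i, c) forces this flow out of (i, c) downwards. *)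
Definition vflow (x : 'I_n * 'I_m -> R) (i : nat) (c : 'I_m.+1) : R :=
  vflow_const i c + \sum_s vflow_coef i c s * x s.

Lemma vflowE x i c :
  vflow x i c = \sum_(k < n | (k <= i)%N) (netflow R a b (Some (k, c)) - hnet x k c).
Proof.
rewrite sumrB /vflow /vflow_const /vflow_coef /hnet; congr (_ + _).
by under eq_bigr do rewrite mulNr mulr_suml; rewrite sumrN exchange_big.
Qed.

Lemma vflow_ext x y i c : x =1 y -> vflow x i c = vflow y i c.
Proof. by move=> xy; rewrite /vflow; under eq_bigr do rewrite xy. Qed.

Definition flow_mx (e : edge n m) (s : 'I_n * 'I_m) : R :=
  match e with
  | inl (inl t) => (s == t)%:R
  | inl (inr (i, c)) => vflow_coef i c s
  | inr c => vflow_coef n.-1 c s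
  end.

Definition flow_const (e : edge n m) : R :=
  match e with
  | inl (inl _) => 0
  | inl (inr (i, c)) => vflow_const i c
  | inr c => vflow_const n.-1 c
  end.

Local Notation flow_of := (affine_map flow_mx flow_const).

Lemma flow_of_hor x s : flow_of x (hor s) = x s.
Proof. by rewrite /affine_map add0r sumr_indicator big_pred1_eq. Qed.

Lemma restrict_flow_of x : restrict (flow_of x) =1 x.
Proof. by move=> s; rewrite restrictE flow_of_hor. Qed.

(* The sink edges serve as the vertical edges leaving the last row. *)
Definition down (g : edge n m -> R) (i : nat) (c : 'I_m.+1) : R :=
  \sum_(t : 'I_n.-1 * 'I_m.+1 | (t.1 == i :> nat) && (t.2 == c)) g (ver t)
  + \sum_(t : 'I_m.+1 | (n.-1 == i) && (t == c)) g (sink t).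

Lemma down_ver g (i : 'I_n.-1) c : down g i c = g (ver (i, c)).
Proof.
rewrite /down (big_pred1 (i, c)) => [|[i' c'] //].
by rewrite big_pred0 ?addr0 // => t; rewrite gtn_eqF.
Qed.

Lemma down_sink g c : down g n.-1 c = g (sink c).
Proof.
rewrite /down big_pred0 => [|t]; last by rewrite ltn_eqF.
by rewrite eqxx add0r big_pred1_eq.
Qed.

Lemma down_flow_of x (i : 'I_n) c : down (flow_of x) i c = vflow x i c.
Proof.
case: (ltnP i n.-1) => [lt_i | le_i]; first exact: (down_ver _ (Ordinal lt_i)).
have -> : i = n.-1 :> nat by move: (ltn_ord i); lia.
exact: down_sink.
Qed.

Lemma down_ge0 g i c : (forall e, 0 <= g e) -> 0 <= down g i c.
Proof. by move=> g_ge0; rewrite addr_ge0 // sumr_ge0. Qed.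

Lemma sum_tail g (i : 'I_n) c :
  \sum_(e : edge n m | etail e == vertex_of (Some (i, c))) g e
    = \sum_(s : 'I_n * 'I_m | (s.1 == i :> nat) && (s.2 == c :> nat)) g (hor s)
      + down g i c.
Proof. by rewrite /edge !big_sumType addrA; congr (_ + _ + _); apply: eq_bigl => -[]. Qed.

Lemma sum_head g (i : 'I_n) c :
  \sum_(e : edge n m | ehead e == vertex_of (Some (i, c))) g e
    = \sum_(s : 'I_n * 'I_m | (s.1 == i :> nat) && (s.2.+1 == c)) g (hor s)
      + (if val i is i'.+1 then down g i' c else 0).
Proof.
rewrite /edge !big_sumType [X in _ + X = _]big_pred0 // addr0.
congr (_ + _); first by apply: eq_bigl => -[].
case: i => [[|i] lt_in] /=; first by apply: big_pred0 => -[].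
rewrite /down [X in _ = _ + X]big_pred0 ?addr0 => [|t]; last first.
  by have -> : (n.-1 == i) = false by apply/eqP; lia.
by apply: eq_bigl => -[].
Qed.

Lemma netout_vertex g (i : 'I_n) c :
  netout g (Some (i, c))
    = hnet (restrict g) i c + (down g i c - (if val i is i'.+1 then down g i' c else 0)).
Proof.
rewrite /netout sum_tail sum_head opprD addrACA hnetE.
by congr (_ - _ + _); apply: eq_bigr => s _; rewrite restrictE.
Qed.

Lemma conservation_downP g (c : 'I_m.+1) :
  (forall i : 'I_n, netout g (Some (i, c)) = netflow R a b (Some (i, c))) <->
  (forall i : 'I_n, down g i c = vflow (restrict g) i c).
Proof.
transitivity (forall i : 'I_n, down g i c - (if val i is i'.+1 then down g i' c else 0)
                = netflow R a b (Some (i, c)) - hnet (restrict g) i c).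
  split=> H i; first by move: (H i); rewrite netout_vertex => <-; rewrite [RHS]addrC addKr.
  by rewrite netout_vertex H addrC subrK.
rewrite prefix_sumP.
by split=> H i; rewrite H vflowE.
Qed.

Hypothesis m_gt0 : (0 < m)%N.

Lemma netflow_vertex (k : 'I_n) (c : 'I_m.+1) :
  netflow R a b (Some (k, c)) = (c == 0 :> nat)%:R * (a k)%:R - (c == m :> nat)%:R * (b k)%:R.
Proof.
case: c => [[|c] lt_c] /=; first by rewrite ltn_eqF // mul1r mul0r subr0.
by case: (c.+1 == m); rewrite /= ?mul0r ?mul1r ?sub0r ?subr0 ?oppr0.
Qed.

Definition colsum (x : 'I_n * 'I_m -> R) (i c : nat) : R :=
  \sum_(s : 'I_n * 'I_m | (s.1 <= i)%N && (s.2 == c :> nat)) x s.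

Lemma sum_rows_le (F : 'I_n * 'I_m -> R) (Q : pred ('I_n * 'I_m)) (i : nat) :
  \sum_(k < n | (k <= i)%N) \sum_(s : 'I_n * 'I_m | (s.1 == k :> nat) && Q s) F s
    = \sum_(s : 'I_n * 'I_m | (s.1 <= i)%N && Q s) F s.
Proof.
rewrite [RHS](partition_big (fun s => s.1) (fun k : 'I_n => (k <= i)%N)) => [|s /andP[] //].
apply: eq_bigr => k le_ki; apply: eq_bigl => s.
case: (eqVneq s.1 k) => [->|/negbTE ne]; first by rewrite eqxx le_ki andbT.
by rewrite andbF (ne : (s.1 == k :> nat) = false).
Qed.

Lemma psum_colsum x (i : 'I_n) (j : 'I_m) : psum x i j = colsum x i j.
Proof.
rewrite /colsum -(sum_rows_le _ (fun s => s.2 == j :> nat)).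
by apply: eq_bigr => k _; rewrite (big_pred1 (k, j)) // => -[].
Qed.

Lemma colsum_out x i c : (m <= c)%N -> colsum x i c = 0.
Proof.
by move=> le_mc; apply: big_pred0 => s; rewrite ltn_eqF ?andbF // (leq_trans _ le_mc).
Qed.

Lemma vflow_colsum x (i : 'I_n) (c : 'I_m.+1) :
  vflow x i c = (c == 0 :> nat)%:R * natsum R a i - (c == m :> nat)%:R * natsum R b i
                - (colsum x i c - if val c is c'.+1 then colsum x i c' else 0).
Proof.
rewrite vflowE sumrB.
under eq_bigr do rewrite netflow_vertex.
under [X in _ - X]eq_bigr do rewrite hnetE.
rewrite !sumrB -!mulr_sumr /natsum !natr_sum.
rewrite (sum_rows_le _ (fun s => s.2 == c :> nat)).
rewrite (sum_rows_le _ (fun s => s.2.+1 == c)).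
have -> : \sum_(s : 'I_n * 'I_m | (s.1 <= i)%N && (s.2.+1 == c)) x s
          = if val c is c'.+1 then colsum x i c' else 0.
  by case: c => [[|c] lt_c]; [apply: big_pred0 => s; rewrite andbF | apply: eq_bigl].
by [].
Qed.

Lemma vflow_first x (i : 'I_n) (c : 'I_m.+1) :
  c = 0 :> nat -> vflow x i c = natsum R a i - psum x i (Ordinal m_gt0).
Proof.
case: c => c lt_c /= c0; subst c.
by rewrite vflow_colsum psum_colsum /= ltn_eqF // mul1r mul0r !subr0.
Qed.

Lemma vflow_mid x (i : 'I_n) (c : 'I_m.+1) (j j' : 'I_m) :
  j'.+1 = j -> c = j :> nat -> vflow x i c = psum x i j' - psum x i j.
Proof.
case: c => c lt_c jj' /= cj; have {cj} cj' : c = j'.+1 by rewrite cj jj'.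
subst c; rewrite vflow_colsum !psum_colsum /= jj' (ltn_eqF (ltn_ord j)).
by rewrite !mul0r subr0 sub0r opprB.
Qed.

Lemma vflow_last x (i : 'I_n) (c : 'I_m.+1) (j : 'I_m) :
  j.+1 = m -> c = m :> nat -> vflow x i c = psum x i j - natsum R b i.
Proof.
case: c => c lt_c jm /= cm; have {cm} cj : c = j.+1 by rewrite cm jm.
subst c; rewrite vflow_colsum psum_colsum /= jm eqxx colsum_out //.
by rewrite mul0r mul1r !sub0r opprK addrC.
Qed.

Lemma PS_iff_vflow_ge0 x :
  PS a b x <-> (forall s, 0 <= x s) /\ (forall (i : 'I_n) (c : 'I_m.+1), 0 <= vflow x i c).
Proof.
split=> -[x_ge0 H]; split=> // i.
  have [lbB [mono ubA]] := H i; case=> -[|c] lt_c.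
    by rewrite vflow_first // subr_ge0; exact: ubA.
  have lt_cm : (c < m)%N by [].
  case: (ltnP c.+1 m) => [lt_c1 | ge_c1].
    by rewrite (@vflow_mid _ _ _ (Ordinal lt_c1) (Ordinal lt_cm)) // subr_ge0; exact: mono.
  have cm : c.+1 = m by lia.
  by rewrite (@vflow_last _ _ _ (Ordinal lt_cm)) // subr_ge0; apply: lbB.
split; [move=> j jm | split=> [j j' jj' | j j0]].
- by have := H i ord_max; rewrite (vflow_last _ _ jm) // subr_ge0.
- by have := H i (widen_ord (leqnSn m) j); rewrite (vflow_mid _ _ jj') // subr_ge0.
- have -> : j = Ordinal m_gt0 by apply: val_inj.
  by have := H i ord0; rewrite vflow_first // subr_ge0.
Qed.

Lemma netout_sink g : netout g None = - \sum_c g (sink c).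
Proof.
rewrite /netout /edge !big_sumType 5?big_pred0; try by case.
by rewrite /= !add0r.
Qed.

Hypothesis n_gt0 : (0 < n)%N.

Lemma natsum_last (d : 'I_n -> nat) (lt_last : (n.-1 < n)%N) :
  natsum R d (Ordinal lt_last) = \sum_i (d i)%:R.
Proof. by rewrite /natsum natr_sum; apply: eq_bigl => k /=; have := ltn_ord k; lia. Qed.

Lemma sum_vflow_last x : \sum_c vflow x n.-1 c = \sum_i (a i)%:R - \sum_i (b i)%:R.
Proof.
have lt_last : (n.-1 < n)%N by rewrite ltn_predL.
rewrite (eq_bigr _ (fun c _ => vflow_colsum x (Ordinal lt_last) c)) 2!sumrB !natsum_last.
pose F k := if k is k'.+1 then colsum x n.-1 k' else 0.
have -> : \sum_(c < m.+1) (F c.+1 - F c) = 0.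
  by rewrite -(big_mkord xpredT (fun k => F k.+1 - F k)) telescope_sumr // /F colsum_out ?subr0.
by rewrite !sumr_indicator (big_pred1 ord0) // (big_pred1 ord_max) // subr0.
Qed.

Lemma flow_of_PS x : PS a b x -> flow_polytope a b (flow_of x).
Proof.
move=> /PS_iff_vflow_ge0 [x_ge0 vflow_ge0]; split.
  case=> [[s|[i c]]|c]; first by rewrite flow_of_hor.
    exact: (vflow_ge0 (Ordinal (leq_trans (ltn_ord i) (leq_pred n)))).
  by apply: (vflow_ge0 (Ordinal _)); rewrite ltn_predL.
case=> [[i c]|]; last first.
  move: (netout_sink (flow_of x)); rewrite /netout => ->.
  by rewrite sum_vflow_last opprB addrC.
apply: (proj2 (conservation_downP _ c)) => k.
by rewrite down_flow_of (vflow_ext _ _ (restrict_flow_of x)).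
Qed.

Lemma restrict_PS y : flow_polytope a b y -> PS a b (restrict y).
Proof.
move=> [y_ge0 cons]; apply/PS_iff_vflow_ge0; split=> [s|i c]; first by rewrite restrictE.
have /conservation_downP <- := fun k => cons (Some (k, c)).
exact: down_ge0.
Qed.

Lemma flow_of_restrict y : flow_polytope a b y -> flow_of (restrict y) =1 y.
Proof.
move=> [_ cons] [[s|[i c]]|c]; first by rewrite flow_of_hor restrictE.
  have /conservation_downP down_vflow := fun k => cons (Some (k, c)).
  rewrite -[RHS](down_ver y i c); symmetry.
  exact: (down_vflow (Ordinal (leq_trans (ltn_ord i) (leq_pred n)))).
have /conservation_downP down_vflow := fun k => cons (Some (k, c)).
rewrite -[RHS](down_sink y c); symmetry.
by apply: (down_vflow (Ordinal _)); rewrite ltn_predL.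
Qed.

End PitmanStanleyFlows.

Lemma flow_mx_int (R : archiRealFieldType) (n m : nat) (e : edge n m) s :
  @flow_mx R n m e s \is a Num.int.
Proof.
by case: e => [[t|[i c]]|c] /=; rewrite ?natr_int // rpredN rpred_sum // => k _;
  rewrite rpredB ?natr_int.
Qed.

Lemma flow_const_int (R : archiRealFieldType) (n m : nat) (a b : 'I_n -> nat)
    (e : edge n m) :
  flow_const R a b e \is a Num.int.
Proof.
case: e => [[t|[i c]]|c] /=; rewrite ?int_num0 // rpred_sum // => k _ /=;
  by do 2?case: ifP; rewrite ?rpredN ?natr_int ?int_num0.
Qed.

Theorem theorem3p4 (R : realType) (n m : nat) (a b : 'I_n -> nat) :
  (0 < n)%N -> (0 < m)%N ->
  integrally_equivalent (@PS R n m a b) (@flow_polytope R n m a b).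
Proof.
move=> n_gt0 m_gt0.
apply: (@integrally_equivalent_affine_inverse _ _ _ _ _
  (@flow_mx R n m) (flow_const R a b) (@restrict_mx R n m) (fun=> 0)).
- exact: flow_mx_int.
- exact: flow_const_int.
- by move=> s e; rewrite natr_int.
- by move=> s; rewrite int_num0.
- exact: flow_of_PS.
- exact: restrict_PS.
- by move=> x _; apply: restrict_flow_of.
- exact: flow_of_restrict.
Qed.
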